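(* Let $\Omega=(a_1,b_1)\times\cdots\times(a_n,b_n)\subset\mathbb{R}^n$ be a bounded box. There is a constant $C_H\in(0,4]$ such that for every admissible mesh size vector $h$ and all $u\in W_0^{1,2}(\overline{\Omega}_h)$, $$\sum_{x\in\Omega_h}\frac{u(x)^2}{\operatorname{dist}(x,\partial\Omega_h)^2}\mathbf{h}\le C_H\sum_{i=1}^n\sum_{x\in\overline{\Omega}_h\setminus\partial_i^+\Omega_h}|D_i^+u(x)|^2\mathbf{h}.$$
   Context: Admissible mesh: $h_i>0$, $a_i=k_ih_i$, $b_i=l_ih_i$, $k_i,l_i\in\mathbb{Z}$, $l_i-k_i>1$; $\mathbb{R}^n_h=\{(h_1z_1,\dots,h_nz_n):z_i\in\mathbb{Z}\}$, $\overline{\Omega}_h=\overline{\Omega}\cap\mathbb{R}^n_h$, $\Omega_h=\Omega\cap\mathbb{R}^n_h$, $\partial\Omega_h=\partial\Omega\cap\mathbb{R}^n_h$, $\partial_i^+\Omega_h=\partial\Omega_h\cap\{x_i=b_i\}$, $\mathbf{h}=h_1\cdots h_n$, $D_i^+u(x)=(u(x+h_ie_i)-u(x))/h_i$. $W_0^{1,2}(\overline{\Omega}_h)$ = functions $u:\overline{\Omega}_h\to\mathbb{R}$ vanishing on $\partial\Omega_h$. $\operatorname{dist}(x,\partial\Omega_h)$ is the Euclidean distance from $x$ to the set $\partial\Omega_h$. *)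

From HB Require Import structures.
From mathcomp Require Import all_boot all_order all_algebra.
From mathcomp Require Import boolp classical_sets fsbigop reals.
Set Implicit Arguments. Unset Strict Implicit. Unset Printing Implicit Defensive.
Import Order.TTheory GRing.Theory Num.Theory.
Local Open Scope ring_scope.
Local Open Scope classical_set_scope.

Section Grid.
Variables (R : realType) (n : nat).
Implicit Types (a b h : 'I_n -> R) (x y : 'rV[R]_n).

Definition admissible a b h : Prop :=
  forall i, 0 < h i /\ exists k l : int,
    a i = h i * k%:~R /\ b i = h i * l%:~R /\ (1 < l - k)%R.

Definition lattice h : set 'rV[R]_n :=
  [set x | exists z : 'I_n -> int, forall i, x ord0 i = h i * (z i)%:~R].

Definition box_open a b : set 'rV[R]_n := [set x | forall i, a i < x ord0 i < b i].
Definition box_closed a b : set 'rV[R]_n := [set x | forall i, a i <= x ord0 i <= b i].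
Definition box_bdry a b : set 'rV[R]_n := box_closed a b `\` box_open a b.

Definition Omega_h a b h := box_open a b `&` lattice h.
Definition Omegabar_h a b h := box_closed a b `&` lattice h.
Definition bdry_h a b h := box_bdry a b `&` lattice h.
Definition bdry_plus_h a b h (i : 'I_n) := bdry_h a b h `&` [set x | x ord0 i = b i].

Definition W0 a b h (u : 'rV[R]_n -> R) : Prop := forall x, bdry_h a b h x -> u x = 0.

Definition Dplus h (i : 'I_n) (u : 'rV[R]_n -> R) x : R :=
  (u (x + h i *: delta_mx ord0 i) - u x) / h i.

Definition eucl_dist x y : R := Num.sqrt (\sum_(i < n) (x ord0 i - y ord0 i) ^+ 2).
Definition dist_set x (S : set 'rV[R]_n) : R := inf [set eucl_dist x y | y in S].

Definition hvol h : R := \prod_(i < n) h i.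
End Grid.

From HB Require Import structures.
From mathcomp Require Import all_boot all_order all_algebra.
From mathcomp Require Import boolp classical_sets fsbigop reals.
From mathcomp Require Import ring lra zify.
Set Implicit Arguments. Unset Strict Implicit. Unset Printing Implicit Defensive.
Import Order.TTheory GRing.Theory Num.Theory.
Local Open Scope ring_scope.
Local Open Scope classical_set_scope.

(* Index the discrete box by multi-indices j, 0 <= j_i <= N_i, where N_i = l_i - k_i.
   A boundary node lies on a face of the box, so the interior node with index j is at
   distance at least min_i h_i m_i from it, where m_i = min(j_i, N_i - j_i); hence
   dist(x, boundary)^-2 <= sum_i (h_i m_i)^-2.  The inequality thus splits into one
   one-dimensional discrete Hardy inequality per direction,
     sum_j w_j^2 / min(j, N - j)^2 <= 4 sum_j (w_(j+1) - w_j)^2   for w_0 = w_N = 0,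
   which follows by telescoping the potentials 2 w_j^2 / j on the left half of the segment
   and 2 w_j^2 / (N - j) on the right half. *)

Section CoordinateShift.
Variables (n K : nat) (i : 'I_n).
Local Notation J := {ffun 'I_n -> 'I_K}.

(* Cyclic in coordinate [i], hence bijections of the multi-indices: sums are invariant
   under them, which is what makes the potentials telescope. *)
Definition shift_up (j : J) : J := [ffun m => if m == i then ordS (j m) else j m].
Definition shift_down (j : J) : J := [ffun m => if m == i then ord_pred (j m) else j m].

Lemma shift_upK : cancel shift_up shift_down.
Proof. by move=> j; apply/ffunP => m; rewrite !ffunE; case: eqP => // _; rewrite ordSK. Qed.

Lemma shift_downK : cancel shift_down shift_up.
Proof. by move=> j; apply/ffunP => m; rewrite !ffunE; case: eqP => // _; rewrite ord_predK. Qed.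

Lemma shift_up_id (j : J) : ((j i).+1 < K)%N -> shift_up j i = (j i).+1 :> nat.
Proof. by move=> jK; rewrite ffunE eqxx /= modn_small. Qed.

Lemma shift_down_id (j : J) : (0 < j i)%N -> shift_down j i = (j i).-1 :> nat.
Proof.
move=> j_gt0; rewrite ffunE eqxx /=; have jK := ltn_ord (j i).
by rewrite -subn1 addnC -addnBA // modnDl modn_small; lia.
Qed.

Lemma shift_up_ne (j : J) m : m != i -> shift_up j m = j m.
Proof. by rewrite ffunE => /negbTE ->. Qed.

Lemma sum_shift_up (V : nmodType) (F : J -> V) : \sum_j F (shift_up j) = \sum_j F j.
Proof. by rewrite [RHS](reindex_inj (can_inj shift_upK)). Qed.

Lemma sum_shift_down (V : nmodType) (F : J -> V) : \sum_j F (shift_down j) = \sum_j F j.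
Proof. by rewrite [RHS](reindex_inj (can_inj shift_downK)). Qed.

End CoordinateShift.

(* At [s = 0] the term [2 B^2 / 0] is [0], so [B] has to vanish there. *)
Lemma hardy_step (R : realFieldType) (s : nat) (A B : R) : (s = 0%N -> B = 0) ->
  A ^+ 2 / (s.+1)%:R ^+ 2 <= 4 * (A - B) ^+ 2 + 2 * B ^+ 2 / s%:R - 2 * A ^+ 2 / (s.+1)%:R.
Proof.
case: s => [/(_ erefl) -> | s _].
  by rewrite subr0 expr0n /= mulr0 mul0r addr0 expr1n !divr1; nra.
set x : R := s.+1%:R; have x_gt0 : 0 < x by rewrite ltr0n.
have -> : (s.+2)%:R = x + 1 by rewrite -natr1.
rewrite -subr_ge0.
have -> : 4 * (A - B) ^+ 2 + 2 * B ^+ 2 / x - 2 * A ^+ 2 / (x + 1) - A ^+ 2 / (x + 1) ^+ 2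
   = (2 * (x * A - (x + 1) * B) ^+ 2 + x * (A - 2 * (x + 1) * (A - B)) ^+ 2)
     / (x * (x + 1) ^+ 2).
  by field; apply/andP; split; lra.
apply: divr_ge0; last by nra.
by rewrite addr_ge0 // mulr_ge0 ?sqr_ge0 // ltW.
Qed.

Section HardyAlongDirection.
Variables (R : realFieldType) (n K : nat) (N : 'I_n -> nat) (i : 'I_n).
Local Notation J := {ffun 'I_n -> 'I_K}.
Variable w : J -> R.
Hypothesis N_lt_K : (N i < K)%N.
Hypothesis w_bdry : forall j : J, ((j i : nat) == 0%N) || (N i <= j i)%N -> w j = 0.
Local Notation up := (shift_up i).
Local Notation down := (shift_down i).

Definition fwd_diff2 (j : J) : R := if (j i < N i)%N then (w (up j) - w j) ^+ 2 else 0.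

Definition potential_left (j : J) : R :=
  if (2 * j i <= N i)%N then 2 * w j ^+ 2 / (j i)%:R else 0.
Definition potential_right (j : J) : R :=
  if (N i < 2 * j i)%N then 2 * w j ^+ 2 / (N i - j i)%:R else 0.

Lemma fwd_diff2_ge0 j : 0 <= fwd_diff2 j.
Proof. by rewrite /fwd_diff2; case: ifP => // _; exact: sqr_ge0. Qed.

Lemma potential_left_ge0 j : 0 <= potential_left j.
Proof.
by rewrite /potential_left; case: ifP => // _; rewrite divr_ge0 // mulr_ge0 // sqr_ge0.
Qed.

Lemma potential_right_ge0 j : 0 <= potential_right j.
Proof.
by rewrite /potential_right; case: ifP => // _; rewrite divr_ge0 // mulr_ge0 // sqr_ge0.
Qed.

Lemma hardy_left_half (j : J) : (0 < j i)%N -> (2 * j i <= N i)%N ->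
  w j ^+ 2 / (j i)%:R ^+ 2 <=
  4 * fwd_diff2 (down j) + potential_left (down j) - potential_left j.
Proof.
move=> j_gt0 j_left; have down_j : (down j i : nat) = (j i).-1 by rewrite shift_down_id.
have := @hardy_step R (j i).-1 (w j) (w (down j)); rewrite prednK //.
rewrite /fwd_diff2 /potential_left down_j shift_downK.
have [-> -> ->] : [/\ ((j i).-1 < N i)%N, (2 * (j i).-1 <= N i)%N & (2 * j i <= N i)%N].
  by split; lia.
by apply => j1; apply: w_bdry; rewrite down_j j1.
Qed.

Lemma hardy_right_half (j : J) : (j i < N i)%N -> (N i < 2 * j i)%N ->
  w j ^+ 2 / (N i - j i)%:R ^+ 2 <=
  4 * fwd_diff2 j + potential_right (up j) - potential_right j.
Proof.
move=> j_lt j_right; have up_j : (up j i : nat) = (j i).+1 by rewrite shift_up_id; lia.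
have := @hardy_step R (N i - j i).-1 (w j) (w (up j)).
have -> : (N i - j i).-1.+1 = (N i - j i)%N by lia.
have -> : (N i - j i).-1 = (N i - up j i)%N by rewrite up_j; lia.
rewrite /fwd_diff2 /potential_right up_j.
have [-> -> ->] : [/\ (j i < N i)%N, (N i < 2 * (j i).+1)%N & (N i < 2 * j i)%N].
  by split; lia.
by rewrite -[(w j - _) ^+ 2]sqrrN opprB; apply => j1; apply: w_bdry; rewrite up_j; lia.
Qed.

Lemma hardy_point (j : J) :
  w j ^+ 2 / (minn (j i) (N i - j i))%:R ^+ 2 <=
  4 * ((if (2 * j i <= N i)%N then fwd_diff2 (down j) else 0)
       + (if (N i < 2 * j i)%N then fwd_diff2 j else 0))
  + (potential_left (down j) - potential_left j)
  + (potential_right (up j) - potential_right j).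
Proof.
have fd_ge0 := fwd_diff2_ge0; have pl_ge0 := potential_left_ge0.
have pr_ge0 := potential_right_ge0.
have [wj0|wj_neq0] := eqVneq (w j) 0.
  have -> : potential_left j = 0.
    by rewrite /potential_left wj0 expr0n /= mulr0 mul0r if_same.
  have -> : potential_right j = 0.
    by rewrite /potential_right wj0 expr0n /= mulr0 mul0r if_same.
  rewrite wj0 expr0n /= mul0r !subr0.
  have := pl_ge0 (down j); have := pr_ge0 (up j).
  by case: ifP; case: ifP => _ _; have := fd_ge0 j; have := fd_ge0 (down j); lra.
have [j_gt0 j_lt] : (0 < j i)%N /\ (j i < N i)%N.
  by split; case: ltnP => // jb; move: wj_neq0; rewrite w_bdry ?eqxx //; lia.
case: (leqP (2 * j i) (N i)) => half.
  have -> : minn (j i) (N i - j i) = j i by apply/minn_idPl; lia.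
  have -> : potential_right j = 0 by rewrite /potential_right ltnNge half.
  have := hardy_left_half j_gt0 half; have := pr_ge0 (up j); have := fd_ge0 j; lra.
have -> : minn (j i) (N i - j i) = (N i - j i)%N by apply/minn_idPr; lia.
have -> : potential_left j = 0 by rewrite /potential_left leqNgt half.
have := hardy_right_half j_lt half; have := pl_ge0 (down j); have := fd_ge0 (down j); lra.
Qed.

Lemma hardy_along_direction :
  \sum_(j : J) w j ^+ 2 / (minn (j i) (N i - j i))%:R ^+ 2 <= 4 * \sum_(j : J) fwd_diff2 j.
Proof.
apply: le_trans (ler_sum _ (fun j _ => hardy_point j)) _.
rewrite !big_split /= !sumrN sum_shift_down sum_shift_up !subrr !addr0.
rewrite -mulr_sumr ler_wpM2l // big_split /=.
rewrite -(sum_shift_up i (fun j => if (2 * j i <= N i)%N then fwd_diff2 (down j) else 0)).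
rewrite -big_split /=; apply: ler_sum => j _; rewrite shift_upK.
rewrite /fwd_diff2; case: ltnP => j_lt; last by rewrite !if_same addr0.
rewrite shift_up_id; last lia.
by case: ifP => h1; case: ifP => h2; rewrite ?add0r ?addr0 ?sqr_ge0 //; exfalso; lia.
Qed.

End HardyAlongDirection.

Lemma fsbig_fin_param (R : nmodType) (J : finType) (T : choiceType) (phi : J -> T)
    (S : set T) (P : pred J) (F : T -> R) :
  injective phi -> (forall x, S x -> exists j, x = phi j) -> (forall j, S (phi j) <-> P j) ->
  \sum_(x \in S) F x = \sum_(j | P j) F (phi j).
Proof.
move=> phi_inj phi_onto S_phi.
have -> : S = phi @` [set j | P j].
  apply/seteqP; split => [x Sx|x [j Pj <-]]; last exact/S_phi.
  by case: (phi_onto x Sx) => j xj; exists j => //; apply/S_phi; rewrite -xj.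
rewrite fsbig_image; last by move=> ? ? _ _ /phi_inj.
rewrite -(@bigfs _ _ _ _ (index_enum J) P (fun j => F (phi j)) (index_enum_uniq J)) //.
by move=> j _; rewrite mem_index_enum.
Qed.

Lemma coord_le_eucl_dist (R : realType) (n : nat) (x y : 'rV[R]_n) m :
  `|x ord0 m - y ord0 m| <= eucl_dist x y.
Proof.
rewrite /eucl_dist -sqrtr_sqr; apply: ler_wsqrtr.
by rewrite (bigD1 m) //= lerDl sumr_ge0 // => *; exact: sqr_ge0.
Qed.

Section BoxGrid.
Variables (R : realType) (n : nat) (a b h : 'I_n -> R) (k l : 'I_n -> int).
Hypothesis h_gt0 : forall i, 0 < h i.
Hypothesis a_def : forall i, a i = h i * (k i)%:~R.
Hypothesis b_def : forall i, b i = h i * (l i)%:~R.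
Hypothesis k_le_l : forall i, (k i <= l i)%R.

Definition steps i : nat := `|l i - k i|%N.
Definition index_bound := (\max_(i < n) steps i).+1.
Local Notation J := {ffun 'I_n -> 'I_index_bound}.
Implicit Type j : J.

Definition node (j : J) : 'rV[R]_n := \row_m (h m * (k m + (j m : nat)%:Z)%:~R).
Definition closed_index (j : J) := [forall m, (j m <= steps m)%N].
Definition open_index (j : J) := [forall m, (0 < j m < steps m)%N].
Definition face_gap i (j : J) : nat := minn (j i) (steps i - j i).

Lemma stepsE i : (steps i)%:Z = l i - k i.
Proof. by rewrite /steps gez0_abs // subr_ge0. Qed.

Lemma steps_lt_bound i : (steps i < index_bound)%N.
Proof. by rewrite ltnS (leq_bigmax i). Qed.

Lemma node_coord j m : node j ord0 m = a m + h m * (j m)%:R.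
Proof. by rewrite mxE intrD a_def mulrDr. Qed.

Lemma b_coord m : b m = a m + h m * (steps m)%:R.
Proof.
rewrite b_def a_def -mulrDr -[(steps m)%:R]/((steps m)%:Z%:~R) stepsE.
by rewrite intrB addrC subrK.
Qed.

Lemma box_closed_node j : box_closed a b (node j) <-> closed_index j.
Proof.
split => [box|/forallP j_le m]; first apply/forallP => m.
  by have := box m; rewrite node_coord b_coord lerD2l ler_pM2l // ler_nat => /andP[].
rewrite node_coord b_coord lerDl lerD2l ler_pM2l // ler_nat j_le andbT.
by rewrite mulr_ge0 // ltW.
Qed.

Lemma box_open_node j : box_open a b (node j) <-> open_index j.
Proof.
split => [box|/forallP j_in m]; first apply/forallP => m.
  have := box m; rewrite node_coord b_coord ltrDl ltrD2l ltr_pM2l //.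
  by rewrite pmulr_rgt0 // ltr0n ltr_nat.
by rewrite node_coord b_coord ltrDl ltrD2l ltr_pM2l // pmulr_rgt0 // ltr0n ltr_nat.
Qed.

Lemma lattice_node j : lattice h (node j).
Proof. by exists (fun m => k m + (j m : nat)%:Z) => m; rewrite mxE. Qed.

Lemma node_inj : injective node.
Proof.
move=> j1 j2 /(congr1 (fun x : 'rV[R]_n => x ord0 _)) e; apply/ffunP => m; apply: val_inj.
have := e m; rewrite !node_coord => /addrI/(mulfI (lt0r_neq0 (h_gt0 m)))/eqP.
by rewrite eqr_nat => /eqP.
Qed.

Lemma Omegabar_h_is_node x : Omegabar_h a b h x -> exists j, x = node j.
Proof.
case=> x_box [z x_z].
have z_range m : (0 <= z m - k m <= (steps m)%:Z)%R.
  have := x_box m; rewrite x_z a_def b_def !ler_pM2l // !ler_int stepsE.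
  by rewrite subr_ge0 lerD2r.
exists [ffun m => inord `|z m - k m|%N]; apply/rowP => m.
have /andP[zk_ge0 zk_le] := z_range m.
rewrite node_coord ffunE inordK; last first.
  by rewrite ltnS (leq_trans _ (leq_bigmax m)) // -lez_nat gez0_abs.
rewrite x_z a_def -mulrDr -[(`|z m - k m|%N)%:R]/((`|z m - k m|%N)%:Z%:~R).
by rewrite gez0_abs // -intrD addrCA subrr addr0.
Qed.

Lemma hvol_ge0 : 0 <= hvol h.
Proof. by apply: prodr_ge0 => i _; exact: ltW. Qed.

Lemma Omega_h_node j : Omega_h a b h (node j) <-> open_index j.
Proof.
by split => [[/box_open_node]|/box_open_node j_in] //; split => //; exact: lattice_node.
Qed.

Lemma Omegabar_h_node j : Omegabar_h a b h (node j) <-> closed_index j.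
Proof.
by split => [[/box_closed_node]|/box_closed_node j_in] //; split => //; exact: lattice_node.
Qed.

Lemma bdry_h_node j : bdry_h a b h (node j) <-> closed_index j && ~~ open_index j.
Proof.
split => [[[/box_closed_node -> /box_open_node j_out] _]|].
  exact/negP.
move=> /andP[/box_closed_node ? /negP j_out].
by split; [split => // /box_open_node|exact: lattice_node].
Qed.

Lemma node_top_face i j : node j ord0 i = b i <-> (j i : nat) = steps i.
Proof.
rewrite node_coord b_coord; split => [/addrI/(mulfI (lt0r_neq0 (h_gt0 i)))/eqP|->] //.
by rewrite eqr_nat => /eqP.
Qed.

Lemma diff_domain_node i j : (Omegabar_h a b h `\` bdry_plus_h a b h i) (node j) <->
  closed_index j && ((j i : nat) != steps i).
Proof.
split => [[/Omegabar_h_node j_cl not_top]|/andP[j_cl /eqP not_top]].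
  rewrite j_cl; apply/eqP => top; apply: not_top; split; last exact/node_top_face.
  by apply/bdry_h_node; rewrite j_cl; apply/negP => /forallP/(_ i); rewrite top ltnn andbF.
by split; [exact/Omegabar_h_node|move=> [_ /node_top_face]].
Qed.

Lemma Omega_h_sub x : Omega_h a b h x -> Omegabar_h a b h x.
Proof. by case=> x_in x_lat; split => // m; case/andP: (x_in m) => /ltW -> /ltW. Qed.

Lemma bdry_h_face y : bdry_h a b h y -> exists m, y ord0 m = a m \/ y ord0 m = b m.
Proof.
move=> [[y_cl y_out] _]; apply: contra_notP y_out => not_face m.
have /andP[ya yb] := y_cl m; rewrite !lt_neqAle ya yb !andbT.
by apply/andP; split; apply/eqP => face; apply: not_face; exists m; [left|right].
Qed.

Lemma bdry_h_neq0 : (0 < n)%N -> bdry_h a b h !=set0.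
Proof.
move=> n_gt0; exists (\row_m a m); split; last by exists k => m; rewrite mxE a_def.
split; last by move=> /(_ (Ordinal n_gt0)); rewrite mxE ltxx.
move=> m; rewrite mxE lexx /= b_coord lerDl mulr_ge0 // ltW //.
Qed.

Lemma face_gap_le_dist j y : open_index j -> bdry_h a b h y ->
  exists m, h m * (face_gap m j)%:R <= eucl_dist (node j) y.
Proof.
move=> /forallP j_in /bdry_h_face [m y_face]; exists m.
apply: le_trans (coord_le_eucl_dist _ _ m); have /andP[_ j_lt] := j_in m.
case: y_face => ->; rewrite node_coord ?b_coord.
  rewrite addrAC subrr add0r ger0_norm; last by rewrite mulr_ge0 // ltW.
  by rewrite ler_pM2l // ler_nat geq_minl.
rewrite distrC opprD addrACA subrr add0r -mulrBr -natrB; last exact: ltnW.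
rewrite ger0_norm; last by rewrite mulr_ge0 // ltW.
by rewrite ler_pM2l // ler_nat geq_minr.
Qed.

Lemma inv_dist2_le j : (0 < n)%N -> open_index j ->
  (dist_set (node j) (bdry_h a b h) ^+ 2)^-1 <= \sum_i ((h i * (face_gap i j)%:R) ^+ 2)^-1.
Proof.
move=> n_gt0 /[dup] j_in /forallP j_in'; set S := \sum_i _.
have gap_gt0 i : 0 < h i * (face_gap i j)%:R.
  by rewrite pmulr_rgt0 // ltr0n /face_gap; case/andP: (j_in' i); lia.
have S_ge i : ((h i * (face_gap i j)%:R) ^+ 2)^-1 <= S.
  by rewrite /S (bigD1 i) //= lerDl sumr_ge0 // => m _; rewrite invr_ge0 sqr_ge0.
have S_gt0 : 0 < S by apply: lt_le_trans (S_ge (Ordinal n_gt0)); rewrite invr_gt0 exprn_gt0.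
set c := (Num.sqrt S)^-1.
have c_gt0 : 0 < c by rewrite invr_gt0 sqrtr_gt0.
have c2 : c ^+ 2 = S^-1 by rewrite exprVn sqr_sqrtr // ltW.
have c_le_gap i : c <= h i * (face_gap i j)%:R.
  rewrite -(@ler_pXn2r _ 2) ?nnegrE ?(ltW c_gt0) ?(ltW (gap_gt0 i)) // c2.
  by rewrite -[X in _ <= X]invrK lef_pV2 ?posrE ?invr_gt0 ?exprn_gt0.
have c_le_dist : c <= dist_set (node j) (bdry_h a b h).
  apply: lb_le_inf => [|_ [y y_bdry <-]].
    by case: (bdry_h_neq0 n_gt0) => y ?; exists (eucl_dist (node j) y), y.
  by case: (face_gap_le_dist j_in y_bdry) => m; apply: le_trans.
have dist_gt0 := lt_le_trans c_gt0 c_le_dist.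
rewrite -[S]invrK -c2 lef_pV2 ?posrE ?exprn_gt0 //.
by rewrite ler_pXn2r ?nnegrE ?(ltW c_gt0) ?(ltW dist_gt0).
Qed.

Lemma node_shift_up i j : (j i < steps i)%N ->
  node j + h i *: delta_mx ord0 i = node (shift_up i j).
Proof.
move=> j_lt; apply/rowP => m; rewrite [LHS]mxE !node_coord !mxE /=.
have [->|m_neq] := eqVneq m i; last by rewrite mulr0 addr0 shift_up_ne.
rewrite mulr1 shift_up_id; last exact: leq_ltn_trans (steps_lt_bound i).
by rewrite -natr1 mulrDr mulr1 addrA.
Qed.

Lemma closed_index_shift_up i j : closed_index j -> (j i < steps i)%N ->
  closed_index (shift_up i j).
Proof.
move=> /forallP j_cl j_lt; apply/forallP => m.
have [->|m_neq] := eqVneq m i; last by rewrite shift_up_ne.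
by rewrite shift_up_id //; exact: leq_ltn_trans (steps_lt_bound i).
Qed.

Lemma open_index_shift_up i j : ~~ closed_index j -> (j i < steps i)%N ->
  ~~ open_index j /\ ~~ open_index (shift_up i j).
Proof.
move=> /forallPn [m]; rewrite -ltnNge => j_gt j_lt.
have m_neq : m != i by apply/eqP => e; move: j_gt; rewrite e; lia.
by split; apply/forallPn; exists m; rewrite ?shift_up_ne //; apply/negP => /andP[_]; lia.
Qed.

Definition grid_fun (u : 'rV[R]_n -> R) (j : J) : R := if open_index j then u (node j) else 0.

Lemma grid_fun_closed u j : W0 a b h u -> closed_index j -> grid_fun u j = u (node j).
Proof.
rewrite /grid_fun => u0; case: ifP => // j_out j_cl.
by rewrite u0 //; apply/bdry_h_node; rewrite j_cl j_out.
Qed.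

Lemma grid_fun_bdry u i j : ((j i : nat) == 0%N) || (steps i <= j i)%N -> grid_fun u j = 0.
Proof. by rewrite /grid_fun; case: ifP => // /forallP/(_ i); lia. Qed.

Lemma energy_node u i : W0 a b h u ->
  \sum_(x \in Omegabar_h a b h `\` bdry_plus_h a b h i) (`|Dplus h i u x| ^+ 2 * hvol h)
  = hvol h / h i ^+ 2 * \sum_(j : J) fwd_diff2 steps i (grid_fun u) j.
Proof.
move=> u0; rewrite (fsbig_fin_param _ node_inj _ (diff_domain_node i)); last first.
  by move=> x [/Omegabar_h_is_node].
rewrite big_mkcond mulr_sumr; apply: eq_bigr => j _; rewrite /fwd_diff2.
case: ifPn => [/andP[j_cl j_top]|j_dom].
  have j_lt : (j i < steps i)%N.
    by move/forallP: j_cl => /(_ i); rewrite leq_eqVlt (negbTE j_top).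
  rewrite j_lt /Dplus node_shift_up // !grid_fun_closed ?closed_index_shift_up //.
  by rewrite real_normK ?num_real // expr_div_n; field; exact: lt0r_neq0.
case: ifPn => j_lt; last by rewrite mulr0.
have j_open : ~~ closed_index j.
  by apply: contra j_dom => j_cl; rewrite j_cl; apply: contraTneq j_lt => ->; rewrite ltnn.
case: (open_index_shift_up j_open j_lt) => j_out up_out.
by rewrite /grid_fun (negbTE j_out) (negbTE up_out) subrr expr0n mulr0.
Qed.

Lemma hardy_weight_node u : (0 < n)%N ->
  \sum_(x \in Omega_h a b h) (u x ^+ 2 / dist_set x (bdry_h a b h) ^+ 2 * hvol h)
  <= \sum_(i < n) (hvol h / h i ^+ 2 *
       \sum_(j : J) grid_fun u j ^+ 2 / (face_gap i j)%:R ^+ 2).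
Proof.
move=> n_gt0.
rewrite (fsbig_fin_param _ node_inj _ Omega_h_node); last first.
  by move=> x /Omega_h_sub /Omegabar_h_is_node.
rewrite [leRHS](eq_bigr _ (fun i _ => mulr_sumr _ _ _ _)).
rewrite exchange_big /= [leRHS](bigID open_index) /= -[leLHS]addr0.
apply: lerD; last first.
  apply: sumr_ge0 => j _; apply: sumr_ge0 => i _.
  by rewrite mulr_ge0 ?divr_ge0 ?sqr_ge0 ?hvol_ge0.
apply: ler_sum => j j_in; rewrite /grid_fun j_in mulrC.
rewrite [leRHS](_ : _ = hvol h * (u (node j) ^+ 2 *
    \sum_i ((h i * (face_gap i j)%:R) ^+ 2)^-1)).
  by rewrite ler_wpM2l ?hvol_ge0 // ler_wpM2l ?sqr_ge0 // inv_dist2_le.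
by rewrite !mulr_sumr; apply: eq_bigr => i _; rewrite [in RHS]exprMn [in RHS]invfM; ring.
Qed.

Lemma hardy_box_fixed_mesh u : (0 < n)%N -> W0 a b h u ->
  \sum_(x \in Omega_h a b h) (u x ^+ 2 / dist_set x (bdry_h a b h) ^+ 2 * hvol h)
  <= 4 * \sum_(i < n) \sum_(x \in Omegabar_h a b h `\` bdry_plus_h a b h i)
           (`|Dplus h i u x| ^+ 2 * hvol h).
Proof.
move=> n_gt0 u0.
apply: le_trans (hardy_weight_node u n_gt0) _.
rewrite mulr_sumr; apply: ler_sum => i _; rewrite energy_node // mulrCA.
rewrite ler_wpM2l ?divr_ge0 ?sqr_ge0 ?hvol_ge0 //.
by apply: hardy_along_direction => [|j]; [exact: steps_lt_bound|exact: grid_fun_bdry].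
Qed.

End BoxGrid.

Theorem mainTheorem8 (R : realType) (n : nat) (a b : 'I_n -> R) :
  (0 < n)%N -> (forall i, a i < b i) ->
  exists CH : R, 0 < CH <= 4 /\
    forall h : 'I_n -> R, admissible a b h ->
    forall u : 'rV[R]_n -> R, W0 a b h u ->
      \sum_(x \in Omega_h a b h)
         (u x ^+ 2 / dist_set x (bdry_h a b h) ^+ 2 * hvol h)
      <= CH * \sum_(i < n) \sum_(x \in Omegabar_h a b h `\` bdry_plus_h a b h i)
                (`|Dplus h i u x| ^+ 2 * hvol h).
Proof.
move=> n_gt0 _; exists 4; split; first by rewrite ltr0n lexx.
move=> h h_adm u u0.
have /choice [kl kl_spec] : forall i, exists p : int * int,
    a i = h i * p.1%:~R /\ b i = h i * p.2%:~R /\ (1 < p.2 - p.1)%R.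
  by move=> i; case: (h_adm i) => _ [k [l kl_i]]; exists (k, l).
apply: (@hardy_box_fixed_mesh R n a b h (fun i => (kl i).1) (fun i => (kl i).2)) => // i.
- by case: (h_adm i).
- by case: (kl_spec i).
- by case: (kl_spec i) => _ [].
- by case: (kl_spec i) => _ [_ /ltW /(le_trans ler01)]; rewrite subr_ge0.
Qed.
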